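(* Let $d=2$ and $n\ge3$ odd, i.e. $\alpha=n/2$, and let $\lambda=\pi/2$ (so $\varkappa=\pi/(2n)$). Then $v_1=-w_{(n-1)/2}$ and $u_0=-w_{(n+1)/2}$, and $$\hat P(t)=\frac{R(t)\prod_{j=0}^{n-1}(t-w_j)(t+w_j)}{(t^2+1)^2}$$ is a polynomial in $t$, with coefficients affine-linear in $(x,y)$, of degree exactly $2n-4$ (its coefficient of $t^{2n-4}$ is a non-constant affine function of $x,y$).
   Context: Let $\eta=\frac{\pi}{2}\cdot\frac{n-2}{n}$, so that $\alpha:=\pi/(\pi-2\eta)=n/2$, and $d=2$. Let $\lambda=\pi/2$ and $\varkappa=(\pi-\lambda-\eta)/2=\pi/(2n)$. Let $x,y$ be real. Define $\rho=\dfrac{\sin2\eta}{\sin\varkappa\,\sin(\varkappa+2\eta)}$, $v_k=\cot(\frac{\varkappa}{2}+\frac{\pi k}{2})$, $u_k=\cot(\frac{\varkappa}{2}+\eta+\frac{\pi k}{2})$ ($k=0,1$), $w_j=\cot(\frac{\varkappa}{2}+\frac{\pi j}{n})$ ($j=0,\dots,n-1$), and $$R(t)=x\rho\frac{(t^2+1)^2}{\prod_{k=0}^{1}(t-v_k)(t-u_k)}+y\rho\frac{(t^2+1)^2}{\prod_{k=0}^{1}(t+v_k)(t+u_k)}-2\cot\varkappa\,\frac{(t^2+1)^2}{\prod_{k=0}^{1}(t-v_k)(t+v_k)}+2\alpha\cot(\alpha\varkappa)\,\frac{(t^2+1)^n}{\prod_{j=0}^{n-1}(t-w_j)(t+w_j)}.$$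 For $t=\cot(\phi/2)$, $R(t)$ equals the function $g(\phi)$ whose real double roots $\phi\in(-\varkappa,\varkappa)$ parametrize the arctic curve of the six-vertex model with domain wall boundary conditions. *)

From Stdlib Require Import Reals Lra Lia List.
Import ListNotations.
Open Scope R_scope.

Definition cot (x : R) : R := cos x / sin x.

Definition prodR (m : nat) (f : nat -> R) : R :=
  fold_right Rmult 1 (map f (seq 0 m)).

(* parameters, with d = 2, alpha = n/2, lambda = pi/2 *)
Definition eta (n : nat) : R := PI / 2 * ((INR n - 2) / INR n).
Definition alpha (n : nat) : R := PI / (PI - 2 * eta n).
Definition lambda : R := PI / 2.
Definition kappa (n : nat) : R := (PI - lambda - eta n) / 2.
Definition rho (n : nat) : R :=
  sin (2 * eta n) / (sin (kappa n) * sin (kappa n + 2 * eta n)).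

Definition v (n k : nat) : R := cot (kappa n / 2 + PI * INR k / 2).
Definition u (n k : nat) : R := cot (kappa n / 2 + eta n + PI * INR k / 2).
Definition w (n j : nat) : R := cot (kappa n / 2 + PI * INR j / INR n).

Definition prodW (n : nat) (t : R) : R :=
  prodR n (fun j => (t - w n j) * (t + w n j)).

Definition Rfun (n : nat) (x y t : R) : R :=
  x * rho n * (t ^ 2 + 1) ^ 2
    / (prodR 2 (fun k => (t - v n k) * (t - u n k)))
  + y * rho n * (t ^ 2 + 1) ^ 2
    / (prodR 2 (fun k => (t + v n k) * (t + u n k)))
  - 2 * cot (kappa n) * (t ^ 2 + 1) ^ 2
    / (prodR 2 (fun k => (t - v n k) * (t + v n k)))
  + 2 * alpha n * cot (alpha n * kappa n) * (t ^ 2 + 1) ^ n / prodW n t.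

Definition Phat (n : nat) (x y t : R) : R :=
  Rfun n x y t * prodW n t / (t ^ 2 + 1) ^ 2.

Definition admissible (n : nat) (t : R) : Prop :=
  (forall k, (k < 2)%nat ->
     t - v n k <> 0 /\ t + v n k <> 0 /\ t - u n k <> 0 /\ t + u n k <> 0) /\
  (forall j, (j < n)%nat -> t - w n j <> 0 /\ t + w n j <> 0).

From Stdlib Require Import Reals Rtrigo_facts Lra Lia List Permutation.
Import ListNotations.
Open Scope R_scope.

(* For n = 2m+1 the poles of the first three terms of R(t) are among the
   roots +-w_j of prod_j (t - w_j)(t + w_j): v_0 = w_0, v_1 = -w_m,
   u_0 = -w_(m+1), u_1 = w_(2m), since the corresponding angles are equal
   or sum to pi.  Multiplying R(t) by that product therefore cancels every
   denominator: the x-, y- and cot-terms become products of 2n-4 linear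
   factors and the last term becomes (t^2+1)^(n-2).  The x-term is monic,
   so the coefficient of t^(2n-4) involves x with factor rho > 0. *)

Definition prodL {A : Type} (f : A -> R) (l : list A) : R :=
  fold_right Rmult 1 (map f l).

Lemma prodL_app {A : Type} (f : A -> R) (l1 l2 : list A) :
  prodL f (l1 ++ l2) = prodL f l1 * prodL f l2.
Proof.
  unfold prodL; induction l1 as [|a l1 IH]; simpl; [ring|].
  rewrite IH; ring.
Qed.

Lemma prodL_Permutation {A : Type} (f : A -> R) (l l' : list A) :
  Permutation l l' -> prodL f l = prodL f l'.
Proof. unfold prodL; induction 1; simpl; try congruence; ring. Qed.

Lemma prodL_neq_0 {A : Type} (f : A -> R) (l : list A) :
  (forall a, In a l -> f a <> 0) -> prodL f l <> 0.
Proof.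
  unfold prodL; induction l as [|a l IH]; simpl; intros Hf; [lra|].
  apply Rmult_integral_contrapositive_currified; auto.
Qed.

Lemma NoDup_incl_Permutation_app {A : Type} (xs l : list A) :
  NoDup xs -> incl xs l -> exists rest, Permutation l (xs ++ rest).
Proof.
  revert l; induction xs as [|x xs IH]; intros l Hnd Hincl.
  - exists l; reflexivity.
  - apply NoDup_cons_iff in Hnd as [Hx Hnd].
    destruct (in_split x l (Hincl x (or_introl eq_refl))) as (l1 & l2 & ->).
    destruct (IH (l1 ++ l2) Hnd) as [rest Hrest].
    + intros y Hy.
      assert (Hyl : In y (l1 ++ x :: l2)) by (apply Hincl; now right).
      apply in_app_or in Hyl; apply in_or_app.
      destruct Hyl as [|[<- | ]]; tauto.
    + exists rest; simpl.
      rewrite <- Hrest; symmetry; apply Permutation_middle.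
Qed.

(* Polynomials are coefficient lists, constant term first. *)

Fixpoint peval (p : list R) (t : R) : R :=
  match p with [] => 0 | a :: p' => a + t * peval p' t end.

Fixpoint padd (p q : list R) : list R :=
  match p, q with
  | [], _ => q
  | _, [] => p
  | a :: p', b :: q' => (a + b) :: padd p' q'
  end.

Definition pscale (c : R) (p : list R) : list R := map (Rmult c) p.

Definition pmul_X_sub (r : R) (p : list R) : list R := padd (0 :: p) (pscale (- r) p).

Definition pmul_X2_add1 (p : list R) : list R := padd (0 :: 0 :: p) p.

Definition pprod_X_sub (rs : list R) : list R := fold_right pmul_X_sub [1] rs.

Definition ppow_X2_add1 (k : nat) : list R := Nat.iter k pmul_X2_add1 [1].

Lemma peval_padd p q t : peval (padd p q) t = peval p t + peval q t.
Proof.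
  revert q; induction p as [|a p IH]; intros [|b q]; simpl; try ring.
  rewrite IH; ring.
Qed.

Lemma peval_pscale c p t : peval (pscale c p) t = c * peval p t.
Proof. induction p as [|a p IH]; simpl; [ring|]. rewrite IH; ring. Qed.

Lemma length_padd p q : length (padd p q) = Nat.max (length p) (length q).
Proof. revert q; induction p as [|a p IH]; intros [|b q]; simpl; auto. Qed.

Lemma nth_padd p q k : nth k (padd p q) 0 = nth k p 0 + nth k q 0.
Proof.
  assert (Hnil : forall j, nth j [] 0 = 0) by (intros [|j]; reflexivity).
  revert q k; induction p as [|a p IH]; intros [|b q] [|k]; simpl;
    rewrite ?Hnil; try ring; apply IH.
Qed.

Lemma nth_pscale c p k : nth k (pscale c p) 0 = c * nth k p 0.
Proof. revert k; induction p as [|a p IH]; intros [|k]; simpl; try ring; auto. Qed.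

Lemma peval_pprod_X_sub rs t : peval (pprod_X_sub rs) t = prodL (fun r => t - r) rs.
Proof.
  unfold prodL; induction rs as [|r rs IH]; simpl; [ring|].
  unfold pmul_X_sub; rewrite peval_padd, peval_pscale; simpl.
  rewrite IH; ring.
Qed.

Lemma length_pprod_X_sub rs : length (pprod_X_sub rs) = S (length rs).
Proof.
  induction rs as [|r rs IH]; simpl; auto.
  unfold pmul_X_sub, pscale; rewrite length_padd, length_map; simpl.
  fold (pprod_X_sub rs); rewrite IH; lia.
Qed.

Lemma pprod_X_sub_monic rs : nth (length rs) (pprod_X_sub rs) 0 = 1.
Proof.
  induction rs as [|r rs IH]; simpl; auto.
  unfold pmul_X_sub; rewrite nth_padd, nth_pscale; simpl.
  fold (pprod_X_sub rs); rewrite IH, nth_overflow by (rewrite length_pprod_X_sub; lia); ring.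
Qed.

Lemma peval_ppow_X2_add1 k t : peval (ppow_X2_add1 k) t = (t ^ 2 + 1) ^ k.
Proof.
  induction k as [|k IH]; [simpl; ring|].
  change (ppow_X2_add1 (S k)) with (pmul_X2_add1 (ppow_X2_add1 k)).
  unfold pmul_X2_add1; rewrite peval_padd; cbn [peval].
  rewrite IH; change ((t ^ 2 + 1) ^ S k) with ((t ^ 2 + 1) * (t ^ 2 + 1) ^ k); ring.
Qed.

Lemma length_ppow_X2_add1 k : length (ppow_X2_add1 k) = S (2 * k).
Proof.
  induction k as [|k IH]; simpl; auto.
  change (ppow_X2_add1 (S k)) with (pmul_X2_add1 (ppow_X2_add1 k)).
  unfold pmul_X2_add1; rewrite length_padd; cbn [length].
  rewrite IH; lia.
Qed.

Lemma peval_as_sum p t N :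
  (length p <= S N)%nat -> peval p t = sum_f_R0 (fun k => nth k p 0 * t ^ k) N.
Proof.
  revert N; induction p as [|a p IH]; intros N Hlen; simpl.
  - symmetry; apply sum_eq_R0; intros [|k] _; simpl; ring.
  - destruct N as [|N].
    + destruct p; simpl in *; [ring | lia].
    + rewrite decomp_sum by lia; simpl.
      rewrite (IH N) by (simpl in Hlen; lia); rewrite scal_sum.
      f_equal; [ring|]. apply sum_eq; intros k _; ring.
Qed.

Definition wroot (n : nat) (p : nat * bool) : R :=
  if snd p then w n (fst p) else - w n (fst p).

Definition wfactors (n : nat) : list (nat * bool) :=
  flat_map (fun j => [(j, true); (j, false)]) (seq 0 n).

Lemma length_wfactors n : length (wfactors n) = (2 * n)%nat.
Proof.
  unfold wfactors; rewrite <- (length_seq n 0) at 2.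
  induction (seq 0 n); simpl; lia.
Qed.

Lemma In_wfactors n j b : (j < n)%nat -> In (j, b) (wfactors n).
Proof.
  intros Hj; apply in_flat_map; exists j; split.
  - apply in_seq; lia.
  - destruct b; simpl; auto.
Qed.

Lemma prodW_wfactors n t : prodW n t = prodL (fun p => t - wroot n p) (wfactors n).
Proof.
  unfold prodW, prodR, prodL, wfactors; induction (seq 0 n) as [|j l IH]; simpl; auto.
  rewrite IH; unfold wroot; simpl; ring.
Qed.

Lemma prodW_quotient n xs (D : R -> R) :
  NoDup xs -> incl xs (wfactors n) ->
  (forall t, D t = prodL (fun p => t - wroot n p) xs) ->
  exists q, length q = S (2 * n - length xs) /\ nth (2 * n - length xs) q 0 = 1 /\
    forall t, D t <> 0 -> prodW n t / D t = peval q t.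
Proof.
  intros Hnd Hincl HD.
  destruct (NoDup_incl_Permutation_app xs (wfactors n) Hnd Hincl) as [rest Hperm].
  assert (Hlen : length rest = (2 * n - length xs)%nat).
  { apply Permutation_length in Hperm.
    rewrite length_wfactors, length_app in Hperm; lia. }
  exists (pprod_X_sub (map (wroot n) rest)).
  rewrite length_pprod_X_sub, length_map, <- Hlen.
  split; [reflexivity|]. split.
  { rewrite <- (length_map (wroot n)); apply pprod_X_sub_monic. }
  intros t HDt.
  rewrite prodW_wfactors, (prodL_Permutation _ _ _ Hperm), prodL_app, <- HD.
  rewrite peval_pprod_X_sub; unfold prodL; rewrite map_map.
  field; exact HDt.
Qed.

Definition denom_minus (n : nat) (t : R) : R := prodR 2 (fun k => (t - v n k) * (t - u n k)).
Definition denom_plus (n : nat) (t : R) : R := prodR 2 (fun k => (t + v n k) * (t + u n k)).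
Definition denom_v (n : nat) (t : R) : R := prodR 2 (fun k => (t - v n k) * (t + v n k)).

Lemma admissible_denoms_neq_0 n t :
  admissible n t ->
  denom_minus n t <> 0 /\ denom_plus n t <> 0 /\ denom_v n t <> 0 /\ prodW n t <> 0.
Proof.
  intros [Hvu Hw].
  assert (Hk : forall k, In k (seq 0 2) ->
    t - v n k <> 0 /\ t + v n k <> 0 /\ t - u n k <> 0 /\ t + u n k <> 0)
    by (intros k Hk; apply Hvu; apply in_seq in Hk; lia).
  repeat split; apply (prodL_neq_0 _ (seq 0 _)); intros k Hin;
    apply Rmult_integral_contrapositive_currified; try apply Hk; auto;
    apply in_seq in Hin; apply Hw; lia.
Qed.

Lemma Phat_expand n x y t :
  (2 <= n)%nat -> admissible n t ->
  Phat n x y t =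
    x * rho n * (prodW n t / denom_minus n t) + y * rho n * (prodW n t / denom_plus n t)
    + - (2 * cot (kappa n)) * (prodW n t / denom_v n t)
    + 2 * alpha n * cot (alpha n * kappa n) * (t ^ 2 + 1) ^ (n - 2).
Proof.
  intros Hn Ht.
  destruct (admissible_denoms_neq_0 n t Ht) as (Hm & Hp & Hv & HW).
  assert (Hs : t ^ 2 + 1 <> 0) by (pose proof (pow2_ge_0 t); lra).
  unfold Phat, Rfun; fold (denom_minus n t) (denom_plus n t) (denom_v n t).
  replace ((t ^ 2 + 1) ^ n) with ((t ^ 2 + 1) ^ (n - 2) * (t ^ 2 + 1) ^ 2)
    by (rewrite <- pow_add; f_equal; lia).
  field; repeat split; auto using pow_nonzero.
Qed.

Lemma cot_supplementary a b : a + b = PI -> cot a = - cot b.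
Proof.
  intros Hab; replace a with (PI - b) by lra.
  unfold cot; rewrite cos_pi_minus, sin_PI_x; unfold Rdiv; ring.
Qed.

Lemma kappa_eq n : (0 < n)%nat -> kappa n = PI / (2 * INR n).
Proof.
  intros Hn; assert (0 < INR n) by (apply lt_0_INR; lia).
  unfold kappa, eta, lambda; field; lra.
Qed.

Lemma eta_eq n : (0 < n)%nat -> eta n = PI / 2 - PI / INR n.
Proof.
  intros Hn; assert (0 < INR n) by (apply lt_0_INR; lia).
  unfold eta; field; lra.
Qed.

Lemma rho_pos n : (3 <= n)%nat -> 0 < rho n.
Proof.
  intros Hn.
  assert (H3 : 3 <= INR n) by (replace 3 with (INR 3) by (simpl; ring); apply le_INR; lia).
  pose proof PI_RGT_0 as Hpi.
  assert (Ha : 0 < PI / INR n) by (apply Rdiv_lt_0_compat; lra).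
  assert (Ha3 : 3 * (PI / INR n) <= PI).
  { replace PI with (PI / INR n * INR n) at 2 by (field; lra); nra. }
  unfold rho; rewrite kappa_eq, eta_eq by lia.
  replace (PI / (2 * INR n)) with (PI / INR n / 2) by (field; lra).
  apply Rdiv_lt_0_compat; [|apply Rmult_lt_0_compat]; apply sin_gt_0; lra.
Qed.

Section OddCase.

Variable m : nat.
Hypothesis m_pos : (1 <= m)%nat.

Local Notation n := (2 * m + 1)%nat.

Lemma INR_n : INR n = 2 * INR m + 1.
Proof. rewrite plus_INR, mult_INR; simpl; ring. Qed.

Ltac angle_field :=
  unfold kappa, eta, lambda; rewrite INR_n, ?S_INR, ?mult_INR; cbn [INR];
  field; pose proof (pos_INR m); lra.

Lemma v0_eq : v n 0 = w n 0.
Proof. unfold v, w; f_equal; angle_field. Qed.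

Lemma v1_eq : v n 1 = - w n m.
Proof. apply cot_supplementary; angle_field. Qed.

Lemma u0_eq : u n 0 = - w n (S m).
Proof. apply cot_supplementary; angle_field. Qed.

Lemma u1_eq : u n 1 = w n (2 * m).
Proof. unfold u, w; f_equal; angle_field. Qed.

Ltac NoDup_indices :=
  repeat (apply NoDup_cons; [simpl; intros Hin; decompose sum Hin; try congruence;
    match goal with H : (_, _) = (_, _) |- _ => injection H; intros; lia end |]);
  apply NoDup_nil.

Ltac incl_wfactors :=
  intros p Hp; simpl in Hp; decompose sum Hp; subst; apply In_wfactors; lia.

Ltac denominator_factors :=
  intros t; unfold denom_minus, denom_plus, denom_v, prodR, prodL, wroot;
  cbn [seq map fold_right fst snd];
  rewrite ?v0_eq, ?v1_eq, ?u0_eq, ?u1_eq; ring.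

Lemma prodW_quotient_minus :
  exists q, length q = S (2 * n - 4) /\ nth (2 * n - 4) q 0 = 1 /\
    forall t, denom_minus n t <> 0 -> prodW n t / denom_minus n t = peval q t.
Proof.
  apply (prodW_quotient n [(0, true); (S m, false); (m, false); (2 * m, true)]%nat);
    [NoDup_indices | incl_wfactors | denominator_factors].
Qed.

Lemma prodW_quotient_plus :
  exists q, length q = S (2 * n - 4) /\ nth (2 * n - 4) q 0 = 1 /\
    forall t, denom_plus n t <> 0 -> prodW n t / denom_plus n t = peval q t.
Proof.
  apply (prodW_quotient n [(0, false); (S m, true); (m, true); (2 * m, false)]%nat);
    [NoDup_indices | incl_wfactors | denominator_factors].
Qed.

Lemma prodW_quotient_v :
  exists q, length q = S (2 * n - 4) /\ nth (2 * n - 4) q 0 = 1 /\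
    forall t, denom_v n t <> 0 -> prodW n t / denom_v n t = peval q t.
Proof.
  apply (prodW_quotient n [(0, true); (0, false); (m, false); (m, true)]%nat);
    [NoDup_indices | incl_wfactors | denominator_factors].
Qed.

End OddCase.

Theorem proposition2 (n : nat) (hn : (3 <= n)%nat) (hodd : Nat.Odd n) :
  v n 1 = - w n ((n - 1) / 2) /\
  u n 0 = - w n ((n + 1) / 2) /\
  exists a b c : nat -> R,
    (b (2 * n - 4)%nat <> 0 \/ c (2 * n - 4)%nat <> 0) /\
    forall x y t : R, admissible n t ->
      Phat n x y t =
      sum_f_R0 (fun k => (a k + b k * x + c k * y) * t ^ k) (2 * n - 4).
Proof.
  destruct hodd as [m ->].
  assert (Hm : (1 <= m)%nat) by lia.
  replace ((2 * m + 1 - 1) / 2)%nat with m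
    by (replace (2 * m + 1 - 1)%nat with (m * 2)%nat by lia; now rewrite Nat.div_mul).
  replace ((2 * m + 1 + 1) / 2)%nat with (S m)
    by (replace (2 * m + 1 + 1)%nat with (S m * 2)%nat by lia; now rewrite Nat.div_mul).
  split; [exact (v1_eq m) | split; [exact (u0_eq m) |]].
  destruct (prodW_quotient_minus m Hm) as (q1 & len1 & lead1 & E1).
  destruct (prodW_quotient_plus m Hm) as (q2 & len2 & _ & E2).
  destruct (prodW_quotient_v m Hm) as (q3 & len3 & _ & E3).
  set (q4 := ppow_X2_add1 (2 * m + 1 - 2)).
  assert (len4 : length q4 = S (2 * (2 * m + 1 - 2))) by apply length_ppow_X2_add1.
  set (K := - (2 * cot (kappa (2 * m + 1)))).
  set (C := 2 * alpha (2 * m + 1) * cot (alpha (2 * m + 1) * kappa (2 * m + 1))).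
  exists (fun k => K * nth k q3 0 + C * nth k q4 0),
    (fun k => rho (2 * m + 1) * nth k q1 0), (fun k => rho (2 * m + 1) * nth k q2 0).
  split.
  - left; rewrite lead1, Rmult_1_r; apply Rgt_not_eq, rho_pos; exact hn.
  - intros x y t Ht.
    destruct (admissible_denoms_neq_0 _ t Ht) as (Dm & Dp & Dv & _).
    rewrite Phat_expand, E1, E2, E3, <- peval_ppow_X2_add1 by (auto; lia); fold q4 K C.
    rewrite !(peval_as_sum _ t (2 * (2 * m + 1) - 4)) by lia.
    rewrite !scal_sum, <- !sum_plus.
    apply sum_eq; intros k _; ring.
Qed.
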